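(* Let $(X,\delta,c)$ be an accepting automaton over $\Sigma$ and let $\mu\mathrm{PL}(\delta,c)$ be as in the context. Then $\mu\mathrm{PL}(\delta,c)$ is minimal: for any two states $U,V$ of $\mu\mathrm{PL}(\delta,c)$, if $L(U)=L(V)$ then $U=V$.
   Context: $\Sigma$ is a finite alphabet, $\Sigma^\ast$ the free monoid with empty word $\epsilon$, $u^r$ the reversal of a word $u$. An accepting automaton is $(X,\delta,c)$ with $\delta:X\to X^\Sigma$ (extended to words by $\delta(x)(\epsilon)=x$, $\delta(x)(wa)=\delta(\delta(x)(w))(a)$) and $c\subseteq X$. Define $\widehat{\delta}:P(X)\to P(X)^\Sigma$ by $\widehat{\delta}(U)(a)=\{x\in X\mid\delta(x)(a)\in U\}$, extended to words in the same way, so that $\widehat{\delta}(U)(w)=\{x\mid\delta(x)(w^r)\in U\}$. Let $\langle c\rangle=\{\widehat{\delta}(c)(w)\mid w\in\Sigma^\ast\}$ and let $\approx$ be the congruence on $\Sigma^\ast$ given by $u\approx v$ iff $\widehat{\delta}(U)(u)=\widehat{\delta}(U)(v)$ for all $U\in\langle c\rangle$. $\mu\mathrm{PL}(\delta,c)$ is the accepting automaton with state space $P(\Sigma^\ast/{\approx})$, transition $\widehat{\sigma}(\mathcal{U})(u)=\{[w]\mid[wu^r]\in\mathcal{U}\}$ and final states $\{\mathcal{U}\mid[\epsilon]\in\mathcal{U}\}$. For a state $\mathcal{U}$, $L(\mathcal{U})=\{u\in\Sigma^\ast\mid[\epsilon]\in\widehat{\sigma}(\mathcal{U})(u)\}$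 is the language it accepts. *)

From mathcomp Require Import all_boot.
Set Implicit Arguments. Unset Strict Implicit. Unset Printing Implicit Defensive.

Section Automaton.
Variables (Sigma : finType) (X : Type) (delta : X -> Sigma -> X) (c : X -> Prop).

Definition word := seq Sigma.

Definition delta_w (x : X) (w : word) : X := foldl delta x w.

Definition dhat (U : X -> Prop) (a : Sigma) : X -> Prop := fun x => U (delta x a).

Definition dhat_w (U : X -> Prop) (w : word) : X -> Prop := foldl dhat U w.

Definition gen_c (U : X -> Prop) : Prop := exists w : word, U = dhat_w c w.

Definition approx (u v : word) : Prop :=
  forall U, gen_c U -> dhat_w U u = dhat_w U v.

(* The quotient Sigma^*/~ : the equivalence classes of ~ *)
Definition qcls : Type := { C : word -> Prop | exists w : word, C = approx w }.

Definition cls (w : word) : qcls := exist _ (approx w) (ex_intro _ w erefl).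

Definition muPL_state : Type := qcls -> Prop.

Definition sigma_hat (U : muPL_state) (u : word) : muPL_state :=
  fun k => exists w : word, k = cls w /\ U (cls (w ++ rev u)).

Definition muPL_final (U : muPL_state) : Prop := U (cls [::]).

Definition lang (U : muPL_state) : word -> Prop :=
  fun u => sigma_hat U u (cls [::]).

End Automaton.

From mathcomp Require Import all_boot.
From Stdlib Require Import FunctionalExtensionality PropExtensionality ProofIrrelevance.

Set Implicit Arguments.
Unset Strict Implicit.
Unset Printing Implicit Defensive.

(* Since [~] is a right congruence, [[w' w] = [w]] whenever [[w'] = [eps]];
   hence [[eps] \in sigma_hat U (w^r)] holds iff [[w] \in U].  So a state [U]
   is recovered from its language as [{[w] | w^r \in L(U)}], and two states
   with the same language coincide. *)

Section MinimalPL.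
Variables (Sigma : finType) (X : Type) (delta : X -> Sigma -> X) (c : X -> Prop).

Local Notation approx := (approx delta c).
Local Notation cls := (cls delta c).

Lemma approx_refl (u : word Sigma) : approx u u.
Proof. by []. Qed.

Lemma approx_catr (u v w : word Sigma) : approx u v -> approx (u ++ w) (v ++ w).
Proof. by move=> uv U cU; rewrite /dhat_w !foldl_cat -!/(dhat_w _ _ _) (uv U cU). Qed.

Lemma approx_eq (u v : word Sigma) : approx u v -> approx u = approx v.
Proof.
move=> uv; apply: functional_extensionality => t; apply: propositional_extensionality.
by split=> ut U cU; [rewrite -(uv U cU) | rewrite (uv U cU)]; apply: ut.
Qed.

Lemma eq_cls (u v : word Sigma) : approx u v -> cls u = cls v.
Proof. by move=> /approx_eq uv; apply: subset_eq_compat. Qed.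

Lemma clsP (k : qcls delta c) : exists w, k = cls w.
Proof. by case: k => C [w defC]; exists w; apply: subset_eq_compat. Qed.

Lemma cls_catl_eps (w u : word Sigma) : cls w = cls [::] -> cls (w ++ u) = cls u.
Proof.
move=> /(f_equal (@proj1_sig _ _)) /= /(f_equal (fun C => C w)) eps_w.
have w_eps : approx [::] w by rewrite -eps_w; apply: approx_refl.
by symmetry; exact: eq_cls (@approx_catr [::] w u w_eps).
Qed.

Lemma state_mem_lang (U : muPL_state delta c) (w : word Sigma) :
  U (cls w) <-> lang U (rev w).
Proof.
split=> [Uw | [w' [w'_eps]]]; first by exists [::]; rewrite cat0s revK.
by rewrite revK cls_catl_eps.
Qed.

End MinimalPL.

Theorem mainTheorem5 (Sigma : finType) (X : Type) (delta : X -> Sigma -> X)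
    (c : X -> Prop) (U V : muPL_state delta c) :
  lang U = lang V -> U = V.
Proof.
move=> eqL; apply: functional_extensionality => k.
have [w ->] := clsP k.
by apply: propositional_extensionality; rewrite !state_mem_lang eqL.
Qed.
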